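(* Fix integers $K\ge1$, $N\ge1$, $d\in[0,1]$, and an arbitrary distribution of the input $\mathbf X\in\{1,\dots,2K\}^N$ of the $2K$-ary i.i.d. deletion channel with deletion probability $d$. With the decomposition $(\mathbf X_1,\dots,\mathbf X_K,\mathbf F_x)$, $(\mathbf Y_1,\dots,\mathbf Y_K,\mathbf F_y)$ described in the context, for every $k\in\{1,\dots,K\}$, $$I(\mathbf X_1,\dots,\mathbf X_K,\mathbf F_x;\mathbf Y_k\mid \mathbf Y_1,\dots,\mathbf Y_{k-1})\le \mathbb E\{N_k\}\,C_2(d)+2\log(N+1),$$ where $C_2(d)$ is the capacity of the binary i.i.d. deletion channel with deletion probability $d$.
   Context: The $2K$-ary i.i.d. deletion channel with deletion probability $d$: an input $\mathbf X=(x_1,\dots,x_N)\in\{1,\dots,2K\}^N$ is sent; each symbol is independently (and independently of $\mathbf X$) deleted with probability $d$ or delivered unchanged with probability $1-d$; the output $\mathbf Y=(y_1,\dots,y_M)$ is the subsequence of surviving symbols in order. The binary i.i.d. deletion channel is the same with alphabet of size 2, and its capacity is $C_2(d)=\lim_{N\to\infty}\max_{P(\mathbf X)}\frac1N I(\mathbf X;\mathbf Y)$. Decomposition: for $k\in\{1,\dots,K\}$ the $k$-th subchannel carries the symbols $2k-1$ and $2k$. Let $\mathbf X_k$ be the subsequence of $\mathbf X$ consisting of the symbols lying in $\{2k-1,2k\}$ (a binary sequence), of length $N_k$, and $\mathbf Y_k$ the subsequence of $\mathbf Y$ consisting of the symbols lying in $\{2k-1,2k\}$, of length $M_k$; thus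 $\mathbf Y_k$ is the output of a binary i.i.d. deletion channel with deletion probability $d$ and input $\mathbf X_k$. Let $\mathbf F_x=(f_x[1],\dots,f_x[N])$ and $\mathbf F_y=(f_y[1],\dots,f_y[M])$ where $f_x[n]=\lceil x_n/2\rceil$ and $f_y[m]=\lceil y_m/2\rceil$ are the subchannel labels. Then $\mathbf X\leftrightarrow(\mathbf X_1,\dots,\mathbf X_K,\mathbf F_x)$ and $\mathbf Y\leftrightarrow(\mathbf Y_1,\dots,\mathbf Y_K,\mathbf F_y)$ are bijective correspondences. All logarithms are to a common base. *)

From Stdlib Require Import Reals List Arith.
Import ListNotations.
Open Scope R_scope.

Definition sumR {T} (l : list T) (f : T -> R) : R := fold_right Rplus 0 (map f l).

Fixpoint all_words {T} (A : list T) (n : nat) : list (list T) :=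
  match n with
  | O => [ [] ]
  | S n' => flat_map (fun a => map (cons a) (all_words A n')) A
  end.

Definition alphabet (K : nat) : list nat := seq 1 (2 * K).

Definition label (s : nat) : nat := ((s + 1) / 2)%nat.

(** Subsequence of the symbols of w lying in {2k-1, 2k}. *)
Definition sub (k : nat) (w : list nat) : list nat :=
  filter (fun s => Nat.eqb (label s) k) w.

(** Deletion pattern: [true] = deleted. Output = surviving symbols in order. *)
Definition delete (x : list nat) (m : list bool) : list nat :=
  map fst (filter (fun p => negb (snd p)) (combine x m)).

Definition is_input_dist (K N : nat) (P : list nat -> R) : Prop :=
  (forall x, 0 <= P x) /\ sumR (all_words (alphabet K) N) P = 1.

(** Underlying finite probability space: outcomes (x, deletion pattern). *)
Definition outcome := (list nat * list bool)%type.

Definition outcomes (K N : nat) : list outcome :=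
  flat_map (fun x => map (fun m => (x, m)) (all_words [false; true] N : list (list bool)))
           (all_words (alphabet K) N).

Definition pattern_prob (d : R) (m : list bool) : R :=
  fold_right Rmult 1 (map (fun b : bool => if b then d else 1 - d) m).

Definition weight (d : R) (P : list nat -> R) (o : outcome) : R :=
  P (fst o) * pattern_prob d (snd o).

Definition RV := outcome -> list (list nat).

Definition rv_eqb (u v : list (list nat)) : bool :=
  if list_eq_dec (list_eq_dec Nat.eq_dec) u v then true else false.

(** Probability that the joint of the variables fs takes its value at o. *)
Definition marg (Om : list outcome) (w : outcome -> R) (fs : list RV) (o : outcome) : R :=
  sumR Om (fun o' => if forallb (fun f => rv_eqb (f o') (f o)) fs then w o' else 0).

(** Conditional mutual information I(A;B|C) = E[ log p(A,B,C)p(C) / (p(A,C)p(B,C)) ]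
    (natural logarithm). *)
Definition cmi (Om : list outcome) (w : outcome -> R) (A B C : RV) : R :=
  sumR Om (fun o => w o *
    ln (marg Om w [A; B; C] o * marg Om w [C] o /
        (marg Om w [A; C] o * marg Om w [B; C] o))).

Definition const_rv : RV := fun _ => (@nil (list nat)).

Definition X_rv : RV := fun o => [fst o].
Definition Y_rv : RV := fun o => [delete (fst o) (snd o)].
(** (X_1, ..., X_K, F_x) *)
Definition Xdec_rv (K : nat) : RV :=
  fun o => map (fun j => sub j (fst o)) (seq 1 K) ++ [map label (fst o)].
Definition Yk_rv (k : nat) : RV := fun o => [sub k (delete (fst o) (snd o))].
Definition Yprefix_rv (k : nat) : RV :=
  fun o => map (fun j => sub j (delete (fst o) (snd o))) (seq 1 (k - 1)).

Definition expected_Nk (K N : nat) (d : R) (P : list nat -> R) (k : nat) : R :=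
  sumR (outcomes K N) (fun o => weight d P o * INR (length (sub k (fst o)))).

(** (1/n) max_{P(X)} I(X;Y) for the binary deletion channel (alphabet {1,2}, K = 1). *)
Definition binary_rate_set (d : R) (n : nat) : R -> Prop :=
  fun r => exists P, is_input_dist 1 n P /\
    r = cmi (outcomes 1 n) (weight d P) X_rv Y_rv const_rv / INR n.

Definition is_binary_capacity (d C : R) : Prop :=
  exists c : nat -> R,
    (forall n, (1 <= n)%nat -> is_lub (binary_rate_set d n) (c n)) /\
    Un_cv c C.

From Stdlib Require Import Reals List Arith Lra Lia Bool.
Import ListNotations.
Open Scope R_scope.

(* Every information quantity is computed exactly on the finite space of pairs
   (input word, deletion pattern) weighted by [weight d P].  For a family [fs] of
   random variables, [negent fs] = sum_o w(o) ln P(fs = fs(o)) is minus the joint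
   entropy, and [cmi] is the usual combination of four of these.

   It then studies deletion
   patterns (the part of an i.i.d. pattern acting on one subchannel is i.i.d. and
   independent of the rest), and the binary channel: the mutual information of a
   product input on two blocks is superadditive up to ln (a + 1), so using
   independent blocks and the definition of C_2, I_n(P) <= n C_2 + ln (n + 1).
   Finally, for the 2K-ary channel,
     I(X_1..X_K,F_x; Y_k | Y_1..Y_(k-1)) <= I(X_k; Y_k)         (Markov, X_k sufficient)
                                         <= I(X_k; Y_k | N_k) + ln (N + 1),
   and given N_k = n the subchannel is the binary channel on n symbols, whence
   I(X_k; Y_k | N_k) <= E{N_k} C_2 + ln (N + 1). *)

Lemma sumR_cons {T} (a : T) l f : sumR (a :: l) f = f a + sumR l f.
Proof. reflexivity. Qed.

Lemma sumR_app {T} (l1 l2 : list T) f : sumR (l1 ++ l2) f = sumR l1 f + sumR l2 f.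
Proof.
  induction l1 as [|a l1 IH]; simpl app; [unfold sumR; simpl; lra|].
  rewrite !sumR_cons, IH; lra.
Qed.

Lemma sumR_ext {T} (l : list T) f g :
  (forall x, In x l -> f x = g x) -> sumR l f = sumR l g.
Proof.
  induction l as [|a l IH]; intros H; [reflexivity|].
  rewrite !sumR_cons, H, IH; [reflexivity| |simpl; auto].
  intros; apply H; simpl; auto.
Qed.

Lemma sumR_plus {T} (l : list T) f g :
  sumR l (fun x => f x + g x) = sumR l f + sumR l g.
Proof. induction l; [unfold sumR; simpl; lra|]. rewrite !sumR_cons, IHl; lra. Qed.

Lemma sumR_minus {T} (l : list T) f g :
  sumR l (fun x => f x - g x) = sumR l f - sumR l g.
Proof. induction l; [unfold sumR; simpl; lra|]. rewrite !sumR_cons, IHl; lra. Qed.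

Lemma sumR_scal {T} (l : list T) c f : sumR l (fun x => c * f x) = c * sumR l f.
Proof. induction l; [unfold sumR; simpl; lra|]. rewrite !sumR_cons, IHl; lra. Qed.

Lemma sumR_scal_r {T} (l : list T) c f : sumR l (fun x => f x * c) = sumR l f * c.
Proof. induction l; [unfold sumR; simpl; lra|]. rewrite !sumR_cons, IHl; lra. Qed.

Lemma sumR_zero {T} (l : list T) : sumR l (fun _ => 0) = 0.
Proof. induction l; [reflexivity|]. rewrite sumR_cons, IHl; lra. Qed.

Lemma sumR_const1 {T} (l : list T) : sumR l (fun _ => 1) = INR (length l).
Proof.
  induction l; [reflexivity|].
  rewrite sumR_cons, IHl. simpl length. rewrite S_INR. lra.
Qed.

Lemma sumR_le {T} (l : list T) f g :
  (forall x, In x l -> f x <= g x) -> sumR l f <= sumR l g.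
Proof.
  induction l as [|a l IH]; intros H; [unfold sumR; simpl; lra|].
  rewrite !sumR_cons.
  assert (f a <= g a) by (apply H; simpl; auto).
  assert (sumR l f <= sumR l g) by (apply IH; intros; apply H; simpl; auto).
  lra.
Qed.

Lemma sumR_nonneg {T} (l : list T) f : (forall x, In x l -> 0 <= f x) -> 0 <= sumR l f.
Proof. intros H. rewrite <- (sumR_zero l). apply sumR_le; auto. Qed.

Lemma sumR_nonneg_eq0 {T} (l : list T) f :
  (forall x, In x l -> 0 <= f x) -> sumR l f = 0 -> forall x, In x l -> f x = 0.
Proof.
  induction l as [|a l IH]; intros H S x Hx; [destruct Hx|].
  rewrite sumR_cons in S.
  assert (0 <= f a) by (apply H; simpl; auto).
  assert (0 <= sumR l f) by (apply sumR_nonneg; intros; apply H; simpl; auto).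
  destruct Hx as [<-|Hx]; [lra|].
  apply IH; auto; [intros; apply H; simpl; auto|lra].
Qed.

Lemma sumR_map {T U} (l : list T) (g : T -> U) f :
  sumR (map g l) f = sumR l (fun x => f (g x)).
Proof. induction l; [reflexivity|]. simpl map. rewrite !sumR_cons, IHl; reflexivity. Qed.

Lemma sumR_flat_map {T U} (l : list T) (g : T -> list U) f :
  sumR (flat_map g l) f = sumR l (fun x => sumR (g x) f).
Proof.
  induction l; [reflexivity|].
  simpl flat_map. rewrite sumR_app, sumR_cons, IHl; reflexivity.
Qed.

Lemma sumR_swap {T U} (l1 : list T) (l2 : list U) f :
  sumR l1 (fun a => sumR l2 (fun b => f a b)) = sumR l2 (fun b => sumR l1 (fun a => f a b)).
Proof.
  induction l1; simpl.
  - symmetry. apply sumR_zero.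
  - rewrite sumR_cons, IHl1, <- sumR_plus. reflexivity.
Qed.

Lemma sumR_prod {T U} (l1 : list T) (l2 : list U) f g :
  sumR l1 f * sumR l2 g = sumR l1 (fun x => sumR l2 (fun y => f x * g y)).
Proof. rewrite <- sumR_scal_r. apply sumR_ext. intros. rewrite sumR_scal. reflexivity. Qed.

Lemma sumR_indic {T} (dec : forall x y : T, {x = y} + {x <> y}) (l : list T) x f :
  NoDup l -> In x l -> sumR l (fun y => if dec y x then f y else 0) = f x.
Proof.
  induction l as [|a l IH]; intros Hn Hi; [destruct Hi|].
  inversion Hn; subst. rewrite sumR_cons. destruct (dec a x) as [<-|Hne].
  - rewrite (sumR_ext _ _ (fun _ => 0)), sumR_zero; [lra|].
    intros y Hy. destruct (dec y a); subst; tauto.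
  - destruct Hi as [->|Hi]; [congruence|]. rewrite IH; auto; lra.
Qed.

Lemma sumR_indic_out {T} (dec : forall x y : T, {x = y} + {x <> y}) (l : list T) x f :
  ~ In x l -> sumR l (fun y => if dec y x then f y else 0) = 0.
Proof.
  intros H. rewrite (sumR_ext _ _ (fun _ => 0)); [apply sumR_zero|].
  intros y Hy. destruct (dec y x); subst; tauto.
Qed.

Lemma ln_le_minus1 x : 0 < x -> ln x <= x - 1.
Proof. intros H. pose proof (exp_ineq1_le (ln x)). rewrite exp_ln in H0; lra. Qed.

Lemma ln_le x y : 0 < x -> x <= y -> ln x <= ln y.
Proof.
  intros H1 H2. destruct (Req_dec x y); [subst; lra|]. left; apply ln_increasing; lra.
Qed.

(** With the convention [/ 0 = 0], a quotient of nonnegatives is nonnegative and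
    [x / y <= 1] whenever [x <= y]. *)
Lemma div_nonneg x y : 0 <= x -> 0 <= y -> 0 <= x / y.
Proof.
  intros. destruct (Req_dec y 0) as [->|]; [unfold Rdiv; rewrite Rinv_0; lra|].
  apply Rmult_le_pos; auto. left; apply Rinv_0_lt_compat; lra.
Qed.

Lemma div_le_1 x y : 0 <= x -> x <= y -> x / y <= 1.
Proof.
  intros. destruct (Req_dec y 0) as [->|]; [unfold Rdiv; rewrite Rinv_0; lra|].
  apply Rmult_le_reg_r with y; [lra|].
  unfold Rdiv. rewrite Rmult_assoc, Rinv_l; lra.
Qed.

(** ** Joint laws of random variables on a finite weighted outcome space *)

Lemma rv_eqb_true u v : rv_eqb u v = true <-> u = v.
Proof. unfold rv_eqb. destruct list_eq_dec; split; congruence. Qed.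

Definition agree (fs : list RV) (o' o : outcome) : bool :=
  forallb (fun f => rv_eqb (f o') (f o)) fs.

Lemma agree_spec fs o' o : agree fs o' o = true <-> (forall f, In f fs -> f o' = f o).
Proof.
  unfold agree. rewrite forallb_forall.
  split; intros H f Hf; apply rv_eqb_true; auto.
Qed.

Lemma agree_refl fs o : agree fs o o = true.
Proof. apply agree_spec. reflexivity. Qed.

Lemma agree_sym fs o' o : agree fs o' o = agree fs o o'.
Proof.
  apply eq_iff_eq_true. rewrite !agree_spec.
  split; intros H f Hf; symmetry; auto.
Qed.

Lemma agree_trans fs o1 o2 o3 :
  agree fs o1 o2 = true -> agree fs o2 o3 = true -> agree fs o1 o3 = true.
Proof. rewrite !agree_spec. intros H1 H2 f Hf. rewrite H1, H2; auto. Qed.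

Lemma agree_app fs gs o' o : agree (fs ++ gs) o' o = agree fs o' o && agree gs o' o.
Proof. apply forallb_app. Qed.

Lemma agree_sublist fs gs o' o :
  (forall f, In f gs -> In f fs) -> agree fs o' o = true -> agree gs o' o = true.
Proof. rewrite !agree_spec. auto. Qed.

Section Entropy.
Variable Om : list outcome.
Variable w : outcome -> R.
Hypothesis w_nonneg : forall o, 0 <= w o.

Local Notation p := (marg Om w).

Lemma marg_def fs o : p fs o = sumR Om (fun o' => if agree fs o' o then w o' else 0).
Proof. reflexivity. Qed.

Lemma marg_nonneg fs o : 0 <= p fs o.
Proof. rewrite marg_def. apply sumR_nonneg. intros; destruct agree; auto; lra. Qed.

Lemma marg_pos fs o : In o Om -> 0 < w o -> 0 < p fs o.
Proof.
  intros Ho Hp. rewrite marg_def.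
  apply Rlt_le_trans with (w o); [exact Hp|].
  revert Ho. generalize Om as l. intros l Ho.
  induction l as [|a l IH]; [destruct Ho|].
  rewrite sumR_cons. destruct Ho as [<-|Ho].
  - assert (0 <= sumR l (fun o' => if agree fs o' a then w o' else 0))
      by (apply sumR_nonneg; intros; destruct agree; auto; lra).
    rewrite agree_refl. lra.
  - assert (0 <= if agree fs a o then w a else 0) by (destruct agree; auto; lra).
    specialize (IH Ho). lra.
Qed.

Lemma marg_agree fs o' o : agree fs o' o = true -> p fs o' = p fs o.
Proof.
  intros H. rewrite !marg_def. apply sumR_ext. intros q _.
  destruct (agree fs q o') eqn:E1, (agree fs q o) eqn:E2; auto.
  - rewrite (agree_trans _ _ _ _ E1 H) in E2. discriminate.
  - rewrite agree_sym in H. rewrite (agree_trans _ _ _ _ E2 H) in E1. discriminate.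
Qed.

Lemma marg_ext fs gs o :
  (forall o', In o' Om -> agree fs o' o = agree gs o' o) -> p fs o = p gs o.
Proof. intros H. rewrite !marg_def. apply sumR_ext. intros; rewrite H; auto. Qed.

Lemma marg_mono fs gs o :
  (forall o', In o' Om -> agree fs o' o = true -> agree gs o' o = true) -> p fs o <= p gs o.
Proof.
  intros H. rewrite !marg_def. apply sumR_le. intros x Hx.
  destruct (agree fs x o) eqn:E; [rewrite H; auto; lra|].
  destruct (agree gs x o); [apply w_nonneg|lra].
Qed.

(** [negent fs] is the average log-probability of [fs], i.e. minus its joint entropy. *)
Definition negent (fs : list RV) : R := sumR Om (fun o => w o * ln (p fs o)).

Lemma negent_ext fs gs :
  (forall o o', In o Om -> In o' Om -> agree fs o' o = agree gs o' o) -> negent fs = negent gs.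
Proof. intros H. unfold negent. apply sumR_ext. intros o Ho. rewrite (marg_ext fs gs); auto. Qed.

Lemma negent_mono fs gs :
  (forall o o', In o Om -> In o' Om -> agree fs o' o = true -> agree gs o' o = true) ->
  negent fs <= negent gs.
Proof.
  intros H. unfold negent. apply sumR_le. intros o Ho.
  destruct (w_nonneg o) as [Hp|H0]; [|rewrite <- H0; lra].
  apply Rmult_le_compat_l; [lra|]. apply ln_le; [apply marg_pos; auto|].
  apply marg_mono; auto.
Qed.

Lemma negent_nil : sumR Om w = 1 -> negent [] = 0.
Proof.
  intros H. unfold negent. rewrite (sumR_ext _ _ (fun _ => 0)); [apply sumR_zero|].
  intros o _. rewrite marg_def, (sumR_ext _ _ w) by reflexivity. rewrite H, ln_1. ring.
Qed.

Lemma negent_factor A B C D :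
  (forall o, In o Om -> 0 < w o -> p A o * p B o = p C o * p D o) ->
  negent A + negent B = negent C + negent D.
Proof.
  intros H. unfold negent. rewrite <- !sumR_plus. apply sumR_ext. intros o Ho.
  destruct (w_nonneg o) as [Hp|H0]; [|rewrite <- H0; ring].
  rewrite <- !Rmult_plus_distr_l, <- !ln_mult by (apply marg_pos; auto).
  rewrite H; auto.
Qed.

Lemma sumR_ln_ratio a b c d :
  sumR Om (fun o => w o * ln (p a o * p b o / (p c o * p d o)))
  = negent a + negent b - negent c - negent d.
Proof.
  unfold negent. rewrite <- sumR_plus, <- !sumR_minus. apply sumR_ext. intros o Ho.
  destruct (w_nonneg o) as [Hp|H0]; [|rewrite <- H0; ring].
  pose proof (marg_pos a o Ho Hp). pose proof (marg_pos b o Ho Hp).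
  pose proof (marg_pos c o Ho Hp). pose proof (marg_pos d o Ho Hp).
  unfold Rdiv. rewrite ln_mult, ln_mult, ln_Rinv, ln_mult; try lra.
  all: try apply Rinv_0_lt_compat; try apply Rmult_lt_0_compat; auto.
Qed.

Lemma cmi_negent A B C :
  cmi Om w A B C = negent [A; B; C] + negent [C] - negent [A; C] - negent [B; C].
Proof. apply sumR_ln_ratio. Qed.

Lemma gibbs r :
  (forall o, In o Om -> 0 < w o -> 0 < r o) ->
  sumR Om (fun o => w o * r o) <= sumR Om w ->
  sumR Om (fun o => w o * ln (r o)) <= 0.
Proof.
  intros Hr Hm.
  assert (sumR Om (fun o => w o * ln (r o)) <= sumR Om (fun o => w o * r o - w o)).
  { apply sumR_le. intros o Ho. destruct (w_nonneg o) as [Hp|H0]; [|rewrite <- H0; lra].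
    pose proof (ln_le_minus1 (r o) (Hr o Ho Hp)). nra. }
  rewrite sumR_minus in H. lra.
Qed.

Lemma average_le_mass r :
  (forall o, In o Om -> 0 < w o -> r o <= 1) -> sumR Om (fun o => w o * r o) <= sumR Om w.
Proof.
  intros H. apply sumR_le. intros o Ho. destruct (w_nonneg o) as [Hp|H0].
  - specialize (H o Ho Hp). nra.
  - rewrite <- H0; lra.
Qed.

Lemma expand_marg fs h :
  sumR Om (fun o => w o * p fs o * h o)
  = sumR Om (fun o'' => w o'' * sumR Om (fun o => if agree fs o o'' then w o * h o else 0)).
Proof.
  transitivity (sumR Om (fun o => sumR Om (fun o'' =>
                  if agree fs o o'' then w o'' * (w o * h o) else 0))).
  - apply sumR_ext. intros o _.
    replace (w o * p fs o * h o) with (p fs o * (w o * h o)) by ring.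
    rewrite marg_def, <- sumR_scal_r.
    apply sumR_ext. intros o'' _. rewrite agree_sym. destruct agree; ring.
  - rewrite sumR_swap. apply sumR_ext. intros o'' _. rewrite <- sumR_scal.
    apply sumR_ext. intros o _. destruct agree; ring.
Qed.

Lemma class_ratio_le1 fs (S : outcome -> bool) :
  (forall o1 o2, S o1 = true -> S o2 = true -> agree fs o1 o2 = true) ->
  sumR Om (fun o => if S o then w o / p fs o else 0) <= 1.
Proof.
  intros HS. destruct (existsb S Om) eqn:E.
  - apply existsb_exists in E as [o0 [Ho0 HS0]].
    rewrite (sumR_ext _ _ (fun o => (if agree fs o o0 && S o then w o else 0) * / p fs o0)).
    + rewrite sumR_scal_r. apply div_le_1.
      { apply sumR_nonneg. intros. destruct (_ && _); auto; lra. }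
      rewrite marg_def. apply sumR_le. intros o _.
      destruct (agree fs o o0), (S o); simpl; auto; lra.
    + intros o _. destruct (S o) eqn:So; [|rewrite andb_false_r; ring].
      rewrite (HS o o0 So HS0), (marg_agree fs o o0 (HS o o0 So HS0)). reflexivity.
  - rewrite (sumR_ext _ _ (fun _ => 0)); [rewrite sumR_zero; lra|].
    intros o Ho. destruct (S o) eqn:So; auto.
    assert (existsb S Om = true) by (apply existsb_exists; eauto). congruence.
Qed.

(** Key counting step behind submodularity: the outcomes that are
    [a++c]-equivalent to [o1] and [b++c]-equivalent to [o2] form at most one
    [a++b++c]-class, and none unless [o1] and [o2] are [c]-equivalent. *)
Lemma double_class_ratio a b c o1 o2 :
  sumR Om (fun o => if agree (a ++ c) o o1 && agree (b ++ c) o o2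
                    then w o / p (a ++ b ++ c) o else 0)
  <= if agree c o1 o2 then 1 else 0.
Proof.
  destruct (agree c o1 o2) eqn:Ec.
  - apply class_ratio_le1. intros q1 q2 H1 H2.
    apply andb_prop in H1 as [A1 B1]. apply andb_prop in H2 as [A2 B2].
    rewrite agree_sym in A2, B2.
    pose proof (agree_trans _ _ _ _ A1 A2) as A. pose proof (agree_trans _ _ _ _ B1 B2) as B.
    rewrite agree_app in A, B |- *. rewrite agree_app.
    apply andb_prop in A as [-> ->]. apply andb_prop in B as [-> _]. reflexivity.
  - rewrite (sumR_ext _ _ (fun _ => 0)); [rewrite sumR_zero; lra|].
    intros o _. destruct (agree (a ++ c) o o1) eqn:A, (agree (b ++ c) o o2) eqn:B; auto.
    rewrite agree_app in A, B. apply andb_prop in A as [_ A]. apply andb_prop in B as [_ B].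
    rewrite agree_sym in A. rewrite (agree_trans _ _ _ _ A B) in Ec. discriminate.
Qed.

(** The ratio [P(a,c) P(b,c) / (P(a,b,c) P(c))] has average at most one:
    expanding [P(b,c)] and then [P(a,c)] reduces it to [double_class_ratio]. *)
Lemma submodular_ratio_mass a b c :
  sumR Om (fun o => w o * (p (a ++ c) o * p (b ++ c) o / (p (a ++ b ++ c) o * p c o)))
  <= sumR Om w.
Proof.
  rewrite (sumR_ext _ _ (fun o => w o * p (b ++ c) o * (p (a ++ c) o / (p (a ++ b ++ c) o * p c o))))
    by (intros; unfold Rdiv; ring).
  rewrite expand_marg. apply average_le_mass. intros o2 Ho2 Hp2.
  pose proof (marg_pos c o2 Ho2 Hp2) as Hc.
  rewrite (sumR_ext _ _ (fun o => / p c o2 *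
     (w o * p (a ++ c) o * ((if agree (b ++ c) o o2 then 1 else 0) / p (a ++ b ++ c) o)))).
  2: { intros o _. destruct (agree (b ++ c) o o2) eqn:B; [|unfold Rdiv; ring].
       rewrite agree_app in B. apply andb_prop in B as [_ B].
       rewrite (marg_agree c o o2 B). unfold Rdiv. rewrite Rinv_mult. ring. }
  rewrite sumR_scal, expand_marg.
  apply Rmult_le_reg_l with (p c o2); [lra|]. rewrite <- Rmult_assoc, Rinv_r, Rmult_1_l, Rmult_1_r by lra.
  rewrite marg_def. apply sumR_le. intros o1 _.
  pose proof (double_class_ratio a b c o1 o2) as Hd.
  assert (Hid : sumR Om (fun o => if agree (a ++ c) o o1 then
                  w o * ((if agree (b ++ c) o o2 then 1 else 0) / p (a ++ b ++ c) o) else 0)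
              = sumR Om (fun o => if agree (a ++ c) o o1 && agree (b ++ c) o o2
                                  then w o / p (a ++ b ++ c) o else 0)).
  { apply sumR_ext. intros o _.
    destruct (agree (a ++ c) o o1), (agree (b ++ c) o o2); simpl; unfold Rdiv; ring. }
  rewrite Hid. pose proof (w_nonneg o1).
  destruct (agree c o1 o2); nra.
Qed.

Lemma negent_submodular a b c :
  negent (a ++ c) + negent (b ++ c) <= negent (a ++ b ++ c) + negent c.
Proof.
  pose proof (gibbs (fun o => p (a ++ c) o * p (b ++ c) o / (p (a ++ b ++ c) o * p c o))) as G.
  cbv beta in G. rewrite sumR_ln_ratio in G.
  enough (negent (a ++ c) + negent (b ++ c) - negent (a ++ b ++ c) - negent c <= 0) by lra.
  apply G; [|apply submodular_ratio_mass].
  intros o Ho Hp. unfold Rdiv.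
  apply Rmult_lt_0_compat; [apply Rmult_lt_0_compat; apply marg_pos; auto|].
  apply Rinv_0_lt_compat, Rmult_lt_0_compat; apply marg_pos; auto.
Qed.

Lemma cmi_nonneg A B C : 0 <= cmi Om w A B C.
Proof. rewrite cmi_negent. pose proof (negent_submodular [A] [B] [C]). simpl app in H. lra. Qed.

Lemma count_in_ge1 (vals : list (list (list nat))) x :
  In x vals -> 1 <= sumR vals (fun v => if rv_eqb x v then 1 else 0).
Proof.
  induction vals as [|v vals IH]; intros H; [destruct H|]. rewrite sumR_cons.
  assert (0 <= sumR vals (fun v => if rv_eqb x v then 1 else 0))
    by (apply sumR_nonneg; intros; destruct rv_eqb; lra).
  destruct H as [->|H].
  - rewrite (proj2 (rv_eqb_true x x) eq_refl). lra.
  - specialize (IH H). destruct rv_eqb; lra.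
Qed.

Lemma class_ratio_card fs g vals o0 :
  (forall o, In o Om -> In (g o) vals) ->
  sumR Om (fun o => if agree fs o o0 then w o / p (g :: fs) o else 0) <= INR (length vals).
Proof.
  intros Hv. rewrite <- sumR_const1.
  apply Rle_trans with (sumR vals (fun v => sumR Om (fun o =>
    if rv_eqb (g o) v && agree fs o o0 then w o / p (g :: fs) o else 0))).
  - rewrite sumR_swap. apply sumR_le. intros o Ho.
    assert (Hq : 0 <= w o / p (g :: fs) o) by (apply div_nonneg; auto; apply marg_nonneg).
    destruct (agree fs o o0).
    + rewrite (sumR_ext _ _ (fun v => (if rv_eqb (g o) v then 1 else 0) * (w o / p (g :: fs) o)))
        by (intros; destruct rv_eqb; simpl; ring).
      rewrite sumR_scal_r. pose proof (count_in_ge1 vals (g o) (Hv o Ho)). nra.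
    + apply sumR_nonneg. intros. rewrite andb_false_r. lra.
  - apply sumR_le. intros v _. apply class_ratio_le1. intros o1 o2 H1 H2.
    apply andb_prop in H1 as [G1 F1]. apply andb_prop in H2 as [G2 F2].
    apply rv_eqb_true in G1, G2. rewrite agree_sym in F2.
    unfold agree at 1. simpl. rewrite G1, G2, (proj2 (rv_eqb_true v v) eq_refl).
    exact (agree_trans _ _ _ _ F1 F2).
Qed.

Lemma negent_add_var_bound g fs (vals : list (list (list nat))) :
  sumR Om w = 1 -> (forall o, In o Om -> In (g o) vals) ->
  negent fs - negent (g :: fs) <= ln (INR (length vals)).
Proof.
  intros Hs Hv. set (s := INR (length vals)).
  assert (Hs0 : 0 < s).
  { unfold s. destruct vals as [|v0 vs].
    - destruct Om as [|o0 l]; [unfold sumR in Hs; simpl in Hs; lra|].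
      destruct (Hv o0 (or_introl eq_refl)).
    - simpl length. rewrite S_INR. pose proof (pos_INR (length vs)). lra. }
  set (r := fun o => p fs o / (s * p (g :: fs) o)).
  assert (Eln : negent fs - negent (g :: fs) - ln s = sumR Om (fun o => w o * ln (r o))).
  { unfold negent. replace (ln s) with (sumR Om (fun o => w o * ln s)) by (rewrite sumR_scal_r, Hs; ring).
    rewrite <- !sumR_minus. apply sumR_ext. intros o Ho.
    destruct (w_nonneg o) as [Hp|H0]; [|rewrite <- H0; ring].
    pose proof (marg_pos fs o Ho Hp). pose proof (marg_pos (g :: fs) o Ho Hp).
    unfold r, Rdiv. rewrite ln_mult, ln_Rinv, ln_mult; try nra.
    apply Rinv_0_lt_compat; nra. }
  assert (Hmass : sumR Om (fun o => w o * r o) <= sumR Om w).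
  { rewrite (sumR_ext _ _ (fun o => / s * (w o * p fs o * / p (g :: fs) o)))
      by (intros; unfold r, Rdiv; rewrite Rinv_mult; ring).
    rewrite sumR_scal, expand_marg.
    apply Rmult_le_reg_l with s; [exact Hs0|].
    rewrite <- Rmult_assoc, Rinv_r, Rmult_1_l by lra.
    rewrite Rmult_comm, <- sumR_scal_r. apply sumR_le. intros o0 _.
    apply Rmult_le_compat_l; auto. apply (class_ratio_card fs g vals o0 Hv). }
  enough (sumR Om (fun o => w o * ln (r o)) <= 0) by lra.
  apply gibbs; [|exact Hmass].
  intros o Ho Hp. unfold r. apply Rdiv_lt_0_compat; [apply marg_pos; auto|].
  apply Rmult_lt_0_compat; auto. apply marg_pos; auto.
Qed.

End Entropy.

Lemma In_all_words {T} (A : list T) n x :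
  In x (all_words A n) <-> length x = n /\ (forall a, In a x -> In a A).
Proof.
  revert x; induction n as [|n IH]; intros x; simpl.
  - split.
    + intros [<-|[]]. simpl; split; auto. intros _ [].
    + intros [H _]; destruct x; simpl in *; auto; discriminate.
  - rewrite in_flat_map. split.
    + intros [a [Ha Hx]]. apply in_map_iff in Hx as [y [<- Hy]]. apply IH in Hy as [H1 H2].
      simpl; split; [congruence|]. intros b [<-|Hb]; auto.
    + intros [H1 H2]. destruct x as [|a y]; [discriminate|].
      exists a. split; [apply H2; simpl; auto|].
      apply in_map, IH. simpl in H1; split; [lia|]. intros; apply H2; simpl; auto.
Qed.

Lemma NoDup_all_words {T} (A : list T) n : NoDup A -> NoDup (all_words A n).
Proof.
  intros HA. induction n as [|n IH]; simpl; [constructor; [intros []|constructor]|].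
  revert IH. generalize (all_words A n) as W. intros W HW.
  induction HA as [|a A Hna HA IHA]; simpl; [constructor|].
  apply NoDup_app; auto.
  - apply NoDup_map_NoDup_ForallPairs; auto. intros x y _ _ H; injection H; auto.
  - intros x Hx1 Hx2. apply in_map_iff in Hx1 as [y [<- _]].
    apply in_flat_map in Hx2 as [b [Hb Hy]]. apply in_map_iff in Hy as [z [Hz _]].
    injection Hz; intros; subst. contradiction.
Qed.

Lemma sumR_words_concat {T} (A : list T) a b (f : list T -> R) :
  sumR (all_words A (a + b)) f
  = sumR (all_words A a) (fun x1 => sumR (all_words A b) (fun x2 => f (x1 ++ x2))).
Proof.
  revert f. induction a as [|a IH]; intros f.
  - simpl. rewrite sumR_cons. change (sumR [] _) with 0. rewrite Rplus_0_r. reflexivity.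
  - simpl. rewrite !sumR_flat_map. apply sumR_ext. intros c _.
    rewrite !sumR_map. apply (IH (fun x => f (c :: x))).
Qed.

Lemma sum_outcomes K N (F : outcome -> R) :
  sumR (outcomes K N) F
  = sumR (all_words (alphabet K) N) (fun x => sumR (all_words [false; true] N) (fun m => F (x, m))).
Proof. unfold outcomes. rewrite sumR_flat_map. apply sumR_ext. intros. apply sumR_map. Qed.

Lemma In_outcomes K N x m :
  In (x, m) (outcomes K N) <-> In x (all_words (alphabet K) N) /\ In m (all_words [false; true] N).
Proof.
  unfold outcomes. rewrite in_flat_map. split.
  - intros [x' [Hx Hm]]. apply in_map_iff in Hm as [m' [E Hm]]. injection E; intros; subst. auto.
  - intros [Hx Hm]. exists x. split; auto. apply in_map_iff. exists m; auto.
Qed.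

Lemma outcome_len K N x m : In (x, m) (outcomes K N) -> length x = N /\ length m = N.
Proof.
  intros H. apply In_outcomes in H as [H1 H2].
  apply In_all_words in H1. apply In_all_words in H2. tauto.
Qed.

Definition Epat (d : R) (n : nat) (H : list bool -> R) : R :=
  sumR (all_words [false; true] n) (fun m => pattern_prob d m * H m).

Lemma Epat_0 d H : Epat d 0 H = H [].
Proof. unfold Epat. simpl. rewrite sumR_cons. unfold sumR, pattern_prob. simpl. ring. Qed.

Lemma Epat_S d n H :
  Epat d (S n) H = (1 - d) * Epat d n (fun m => H (false :: m)) + d * Epat d n (fun m => H (true :: m)).
Proof.
  unfold Epat.
  change (all_words [false; true] (S n))
    with (flat_map (fun a => map (cons a) (all_words [false; true] n)) [false; true]).
  rewrite sumR_flat_map, !sumR_cons, !sumR_map, <- !sumR_scal.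
  change (sumR [] _) with 0. rewrite Rplus_0_r.
  f_equal; apply sumR_ext; intros; unfold pattern_prob; simpl; ring.
Qed.

Lemma Epat_ext d n H1 H2 :
  (forall m, In m (all_words [false; true] n) -> H1 m = H2 m) -> Epat d n H1 = Epat d n H2.
Proof. intros E. unfold Epat. apply sumR_ext. intros. rewrite E; auto. Qed.

Lemma Epat_const d n c : Epat d n (fun _ => c) = c.
Proof. induction n; [apply Epat_0|]. rewrite Epat_S, !IHn. ring. Qed.

Lemma pattern_prob_nonneg d m : 0 <= d <= 1 -> 0 <= pattern_prob d m.
Proof.
  intros Hd. induction m as [|b m IH]; unfold pattern_prob; simpl; [lra|].
  apply Rmult_le_pos; auto. destruct b; lra.
Qed.

Lemma pattern_prob_app d m1 m2 : pattern_prob d (m1 ++ m2) = pattern_prob d m1 * pattern_prob d m2.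
Proof. induction m1; unfold pattern_prob in *; simpl; [ring|]. rewrite IHm1. ring. Qed.

(** ** Deletion and the subchannel decomposition *)

Lemma delete_cons c x b m : delete (c :: x) (b :: m) = if b then delete x m else c :: delete x m.
Proof. unfold delete. simpl. destruct b; reflexivity. Qed.

Lemma delete_len x m : (length (delete x m) <= length x)%nat.
Proof.
  revert m; induction x as [|c x IH]; intros [|b m]; unfold delete; simpl; try lia.
  destruct b; simpl; specialize (IH m); unfold delete in IH; lia.
Qed.

Lemma delete_app x1 x2 m1 m2 : length x1 = length m1 ->
  delete (x1 ++ x2) (m1 ++ m2) = delete x1 m1 ++ delete x2 m2.
Proof.
  revert m1; induction x1 as [|c x1 IH]; intros [|b m1] H; simpl in H; try discriminate; auto.
  simpl app. rewrite !delete_cons. destruct b; rewrite IH; auto.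
Qed.

Lemma delete_map (f : nat -> nat) x m : delete (map f x) m = map f (delete x m).
Proof.
  revert m; induction x as [|c x IH]; intros [|b m]; auto.
  simpl map. rewrite !delete_cons. destruct b; simpl; rewrite IH; auto.
Qed.

Lemma sub_cons k c x : sub k (c :: x) = if Nat.eqb (label c) k then c :: sub k x else sub k x.
Proof. reflexivity. Qed.

Definition subpat (k : nat) (x : list nat) (m : list bool) : list bool :=
  map snd (filter (fun p => Nat.eqb (label (fst p)) k) (combine x m)).

Definition rest (k : nat) (l : list nat) : list nat :=
  filter (fun s => negb (Nat.eqb (label s) k)) l.

Lemma subpat_cons k c x b m :
  subpat k (c :: x) (b :: m) = if Nat.eqb (label c) k then b :: subpat k x m else subpat k x m.
Proof. unfold subpat. simpl. destruct (Nat.eqb (label c) k); reflexivity. Qed.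

Lemma rest_cons k c l : rest k (c :: l) = if Nat.eqb (label c) k then rest k l else c :: rest k l.
Proof. unfold rest. simpl. destruct (Nat.eqb (label c) k); reflexivity. Qed.

Lemma sub_delete k x m : length x = length m -> sub k (delete x m) = delete (sub k x) (subpat k x m).
Proof.
  revert m; induction x as [|c x IH]; intros [|b m] H; simpl in H; try discriminate; auto.
  rewrite delete_cons, subpat_cons, !sub_cons.
  destruct b, (Nat.eqb (label c) k) eqn:E; rewrite ?delete_cons, ?sub_cons, ?E, ?IH; auto.
Qed.

Lemma Epat_subpat d k x (F : list bool -> R) :
  Epat d (length x) (fun m => F (subpat k x m)) = Epat d (length (sub k x)) F.
Proof.
  revert F; induction x as [|c x IH]; intros F; [reflexivity|].
  change (length (c :: x)) with (S (length x)). rewrite Epat_S, sub_cons.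
  destruct (Nat.eqb (label c) k) eqn:E.
  - change (length (c :: sub k x)) with (S (length (sub k x))). rewrite Epat_S, <- !IH.
    f_equal; f_equal; apply Epat_ext; intros; rewrite subpat_cons, E; reflexivity.
  - rewrite (Epat_ext _ _ (fun m => F (subpat k (c :: x) (false :: m))) (fun m => F (subpat k x m))),
      (Epat_ext _ _ (fun m => F (subpat k (c :: x) (true :: m))) (fun m => F (subpat k x m)))
      by (intros; rewrite subpat_cons, E; reflexivity).
    rewrite IH. ring.
Qed.

(** Given the input, the outputs of subchannel [k] and of the other subchannels
    are independent, since they are governed by disjoint parts of the pattern. *)
Lemma Epat_sub_rest_indep d k x (F G : list nat -> R) :
  Epat d (length x) (fun m => F (rest k (delete x m)) * G (sub k (delete x m)))
  = Epat d (length x) (fun m => F (rest k (delete x m))) * Epat d (length x) (fun m => G (sub k (delete x m))).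
Proof.
  revert F G; induction x as [|c x IH]; intros F G; [rewrite !Epat_0; ring|].
  change (length (c :: x)) with (S (length x)). rewrite !Epat_S.
  set (Fc := if Nat.eqb (label c) k then F else fun l => F (c :: l)).
  set (Gc := if Nat.eqb (label c) k then fun l => G (c :: l) else G).
  assert (HF : forall l, F (rest k (c :: l)) = Fc (rest k l))
    by (intros; unfold Fc; rewrite rest_cons; destruct Nat.eqb; reflexivity).
  assert (HG : forall l, G (sub k (c :: l)) = Gc (sub k l))
    by (intros; unfold Gc; rewrite sub_cons; destruct Nat.eqb; reflexivity).
  rewrite (Epat_ext _ _ (fun m => F (rest k (delete (c :: x) (false :: m)))
                                  * G (sub k (delete (c :: x) (false :: m))))
                        (fun m => Fc (rest k (delete x m)) * Gc (sub k (delete x m))))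
    by (intros; rewrite delete_cons, HF, HG; reflexivity).
  rewrite (Epat_ext _ _ (fun m => F (rest k (delete (c :: x) (false :: m))))
                        (fun m => Fc (rest k (delete x m))))
    by (intros; rewrite delete_cons, HF; reflexivity).
  rewrite (Epat_ext _ _ (fun m => G (sub k (delete (c :: x) (false :: m))))
                        (fun m => Gc (sub k (delete x m))))
    by (intros; rewrite delete_cons, HG; reflexivity).
  change (delete (c :: x) (true :: ?m)) with (delete x m).
  rewrite (IH Fc Gc), (IH F G).
  unfold Fc, Gc. destruct (Nat.eqb (label c) k); ring.
Qed.

Lemma weight_nonneg d P o : 0 <= d <= 1 -> (forall x, 0 <= P x) -> 0 <= weight d P o.
Proof. intros. unfold weight. apply Rmult_le_pos; auto. apply pattern_prob_nonneg; auto. Qed.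

Lemma sum_weight_words d K N P :
  sumR (outcomes K N) (weight d P) = sumR (all_words (alphabet K) N) P.
Proof.
  rewrite sum_outcomes. apply sumR_ext. intros x _.
  unfold weight. simpl. rewrite sumR_scal.
  pose proof (Epat_const d N 1) as E. unfold Epat in E.
  rewrite (sumR_ext _ _ (fun m => pattern_prob d m * 1)) by (intros; ring). rewrite E. ring.
Qed.

Lemma sum_weight d K N P : is_input_dist K N P -> sumR (outcomes K N) (weight d P) = 1.
Proof. intros [_ HP]. rewrite sum_weight_words. exact HP. Qed.

Ltac agree_simpl := unfold agree; cbn [forallb]; rewrite ?andb_true_r.
Ltac agree_unfold := agree_simpl; apply eq_iff_eq_true; rewrite ?andb_true_iff, ?rv_eqb_true.

Lemma cmi_const Om w A B :
  (forall o, 0 <= w o) -> sumR Om w = 1 ->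
  cmi Om w A B const_rv = negent Om w [A; B] - negent Om w [A] - negent Om w [B].
Proof.
  intros Hw Hs. rewrite (cmi_negent Om w Hw).
  rewrite (negent_ext Om w [A; B; const_rv] [A; B]), (negent_ext Om w [const_rv] []),
    (negent_ext Om w [A; const_rv] [A]), (negent_ext Om w [B; const_rv] [B]), negent_nil by
    (auto; intros; agree_unfold; unfold const_rv; tauto).
  ring.
Qed.

Definition binary_mi (d : R) (n : nat) (P : list nat -> R) : R :=
  cmi (outcomes 1 n) (weight d P) X_rv Y_rv const_rv.

(** On the single outcome of length zero every variable is constant. *)
Lemma binary_mi_empty d P : 0 <= d <= 1 -> is_input_dist 1 0 P -> binary_mi d 0 P = 0.
Proof.
  intros Hd HP. unfold binary_mi.
  assert (Hw : forall o, 0 <= weight d P o) by (intros; apply weight_nonneg; auto; apply HP).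
  rewrite cmi_const by (auto; apply sum_weight; auto).
  assert (Htriv : forall fs, negent (outcomes 1 0) (weight d P) fs = negent (outcomes 1 0) (weight d P) []).
  { intros fs. apply negent_ext. intros o o' [<-|[]] [<-|[]]. rewrite agree_refl. reflexivity. }
  rewrite (Htriv [X_rv; Y_rv]), (Htriv [X_rv]), (Htriv [Y_rv]), negent_nil
    by (apply sum_weight; auto). ring.
Qed.

(** *** Two independent blocks *)

Lemma firstn_app_len {T} (l1 l2 : list T) n : length l1 = n -> firstn n (l1 ++ l2) = l1.
Proof. intros <-. induction l1; simpl; auto. f_equal; auto. Qed.

Lemma skipn_app_len {T} (l1 l2 : list T) n : length l1 = n -> skipn n (l1 ++ l2) = l2.
Proof. intros <-. induction l1; simpl; auto. Qed.

Lemma app_inj_len {T} (a1 a2 b1 b2 : list T) :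
  length a1 = length b1 -> a1 ++ a2 = b1 ++ b2 -> a1 = b1 /\ a2 = b2.
Proof.
  intros H E. split.
  - rewrite <- (firstn_app_len a1 a2 _ eq_refl), E, H. apply firstn_app_len; reflexivity.
  - rewrite <- (skipn_app_len a1 a2 _ eq_refl), E, H. apply skipn_app_len; reflexivity.
Qed.

Definition cat_outcome (o1 o2 : outcome) : outcome := (fst o1 ++ fst o2, snd o1 ++ snd o2).

Definition prod_input (a : nat) (P1 P2 : list nat -> R) (x : list nat) : R :=
  P1 (firstn a x) * P2 (skipn a x).

Lemma prod_input_dist a b P1 P2 :
  is_input_dist 1 a P1 -> is_input_dist 1 b P2 -> is_input_dist 1 (a + b) (prod_input a P1 P2).
Proof.
  intros [H1 S1] [H2 S2]. split; [intros; unfold prod_input; apply Rmult_le_pos; auto|].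
  rewrite sumR_words_concat, <- (Rmult_1_r 1). rewrite <- S1 at 1. rewrite <- S2, sumR_prod.
  apply sumR_ext. intros x1 Hx1. apply sumR_ext. intros x2 _. unfold prod_input.
  apply In_all_words in Hx1 as [Hx1 _]. rewrite firstn_app_len, skipn_app_len; auto.
Qed.

Section Blocks.
Variable d : R.
Variables a b : nat.
Variables P1 P2 : list nat -> R.
Hypothesis Hd : 0 <= d <= 1.
Hypothesis HP1 : is_input_dist 1 a P1.
Hypothesis HP2 : is_input_dist 1 b P2.

Let Om := outcomes 1 (a + b).
Let w := weight d (prod_input a P1 P2).
Let Om1 := outcomes 1 a.
Let w1 := weight d P1.
Let Om2 := outcomes 1 b.
Let w2 := weight d P2.

Lemma sumR_blocks (F : outcome -> R) :
  sumR Om (fun o => w o * F o)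
  = sumR Om1 (fun o1 => sumR Om2 (fun o2 => w1 o1 * w2 o2 * F (cat_outcome o1 o2))).
Proof.
  unfold Om, Om1, Om2. rewrite !sum_outcomes, sumR_words_concat. apply sumR_ext. intros x1 Hx1.
  apply In_all_words in Hx1 as [Lx _].
  rewrite (sumR_ext _ _ (fun x2 => sumR (all_words [false; true] a) (fun m1 =>
     sumR (all_words [false; true] b) (fun m2 => w (x1 ++ x2, m1 ++ m2) * F (x1 ++ x2, m1 ++ m2)))))
    by (intros; apply (sumR_words_concat _ a b (fun m => w (_, m) * F (_, m)))).
  rewrite sumR_swap. apply sumR_ext. intros m1 Hm1. apply In_all_words in Hm1 as [Lm _].
  rewrite sum_outcomes. apply sumR_ext. intros x2 _. apply sumR_ext. intros m2 _.
  unfold w, w1, w2, weight, prod_input, cat_outcome. simpl.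
  rewrite firstn_app_len, skipn_app_len, pattern_prob_app by auto. ring.
Qed.

Let mass1 : sumR Om1 w1 = 1.
Proof. apply sum_weight; auto. Qed.
Let mass2 : sumR Om2 w2 = 1.
Proof. apply sum_weight; auto. Qed.
Let w1_nonneg o : 0 <= w1 o.
Proof. apply weight_nonneg; auto. apply HP1. Qed.
Let w2_nonneg o : 0 <= w2 o.
Proof. apply weight_nonneg; auto. apply HP2. Qed.
Let w_nonneg o : 0 <= w o.
Proof. apply weight_nonneg; auto. apply (prod_input_dist a b P1 P2 HP1 HP2). Qed.

Lemma negent_blocks fs fs1 fs2 :
  (forall o1 o1' o2 o2', In o1 Om1 -> In o1' Om1 ->
     agree fs (cat_outcome o1' o2') (cat_outcome o1 o2) = agree fs1 o1' o1 && agree fs2 o2' o2) ->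
  negent Om w fs = negent Om1 w1 fs1 + negent Om2 w2 fs2.
Proof.
  intros Hfs. unfold negent at 1. rewrite sumR_blocks.
  assert (Hmarg : forall o1 o2, In o1 Om1 ->
            marg Om w fs (cat_outcome o1 o2) = marg Om1 w1 fs1 o1 * marg Om2 w2 fs2 o2).
  { intros o1 o2 Ho1. rewrite !marg_def.
    rewrite (sumR_ext _ _ (fun o => w o * (if agree fs o (cat_outcome o1 o2) then 1 else 0)))
      by (intros; destruct agree; ring).
    rewrite sumR_blocks, sumR_prod. apply sumR_ext. intros o1' H1. apply sumR_ext. intros o2' _.
    rewrite Hfs by auto. destruct (agree fs1 o1' o1), (agree fs2 o2' o2); simpl; ring. }
  rewrite (sumR_ext _ _ (fun o1 => w1 o1 * ln (marg Om1 w1 fs1 o1) * sumR Om2 w2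
                                  + w1 o1 * sumR Om2 (fun o2 => w2 o2 * ln (marg Om2 w2 fs2 o2)))).
  - change (sumR Om2 (fun o2 => w2 o2 * ln (marg Om2 w2 fs2 o2))) with (negent Om2 w2 fs2).
    rewrite sumR_plus, !sumR_scal_r, mass1, mass2. unfold negent. ring.
  - intros o1 Ho1.
    rewrite <- (sumR_scal Om2 (w1 o1 * ln (marg Om1 w1 fs1 o1))), <- sumR_scal, <- sumR_plus.
    apply sumR_ext. intros o2 Ho2. rewrite Hmarg by auto.
    destruct (w1_nonneg o1) as [p1|z1]; [|rewrite <- z1; ring].
    destruct (w2_nonneg o2) as [p2|z2]; [|rewrite <- z2; ring].
    rewrite ln_mult by (apply marg_pos; auto using w1_nonneg, w2_nonneg). ring.
Qed.

Definition Yfirst : RV := fun o => [delete (firstn a (fst o)) (firstn a (snd o))].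
Definition Ylast : RV := fun o => [delete (skipn a (fst o)) (skipn a (snd o))].
Definition Lfirst : RV := fun o => [repeat 0%nat (length (delete (firstn a (fst o)) (firstn a (snd o))))].

Lemma agree_blocks_XY o1 o1' o2 o2' : In o1 Om1 -> In o1' Om1 ->
  agree [X_rv; Yfirst; Ylast] (cat_outcome o1' o2') (cat_outcome o1 o2)
  = agree [X_rv; Y_rv] o1' o1 && agree [X_rv; Y_rv] o2' o2.
Proof.
  destruct o1 as [x1 m1], o1' as [x1' m1'], o2 as [x2 m2], o2' as [x2' m2']. intros H1 H1'.
  apply outcome_len in H1 as [Lx Lm]. apply outcome_len in H1' as [Lx' Lm'].
  agree_unfold. unfold X_rv, Yfirst, Ylast, Y_rv, cat_outcome. simpl fst; simpl snd.
  rewrite !firstn_app_len, !skipn_app_len by auto. split.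
  - intros [H0 [H3 H4]]. injection H0 as H0.
    apply app_inj_len in H0 as [-> ->]; [repeat split; auto|congruence].
  - intros [[E1 E2] [E3 E4]]. injection E1 as ->. injection E3 as ->. auto.
Qed.

Lemma agree_blocks_X o1 o1' o2 o2' : In o1 Om1 -> In o1' Om1 ->
  agree [X_rv] (cat_outcome o1' o2') (cat_outcome o1 o2) = agree [X_rv] o1' o1 && agree [X_rv] o2' o2.
Proof.
  destruct o1 as [x1 m1], o1' as [x1' m1']. intros H1 H1'.
  apply outcome_len in H1 as [Lx _]. apply outcome_len in H1' as [Lx' _].
  agree_unfold. unfold X_rv. simpl. split.
  - intros H0. injection H0 as H0. apply app_inj_len in H0 as [-> ->]; [auto|congruence].
  - intros [E1 E2]. injection E1 as ->. injection E2 as ->. auto.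
Qed.

Lemma agree_blocks_Y o1 o1' o2 o2' : In o1 Om1 -> In o1' Om1 ->
  agree [Yfirst; Ylast] (cat_outcome o1' o2') (cat_outcome o1 o2) = agree [Y_rv] o1' o1 && agree [Y_rv] o2' o2.
Proof.
  destruct o1 as [x1 m1], o1' as [x1' m1'], o2 as [x2 m2], o2' as [x2' m2']. intros H1 H1'.
  apply outcome_len in H1 as [Lx Lm]. apply outcome_len in H1' as [Lx' Lm'].
  agree_unfold. unfold Yfirst, Ylast, Y_rv, cat_outcome. simpl fst; simpl snd.
  rewrite !firstn_app_len, !skipn_app_len by auto. tauto.
Qed.

(** The pair of block outputs is the output together with the length of its first part. *)
Lemma agree_output_split fs o o' : In o Om -> In o' Om ->
  agree (fs ++ [Yfirst; Ylast]) o' o = agree (Lfirst :: fs ++ [Y_rv]) o' o.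
Proof.
  destruct o as [x m], o' as [x' m']. intros Ho Ho'.
  apply outcome_len in Ho as [Lx Lm]. apply outcome_len in Ho' as [Lx' Lm'].
  assert (Hsplit : forall x m, length x = length m -> (a <= length x)%nat ->
            delete x m = delete (firstn a x) (firstn a m) ++ delete (skipn a x) (skipn a m)).
  { intros y n Hl Ha. rewrite <- (firstn_skipn a y) at 1. rewrite <- (firstn_skipn a n) at 1.
    apply delete_app. rewrite !length_firstn. lia. }
  change (agree (Lfirst :: fs ++ [Y_rv]) (x', m') (x, m))
    with (agree ([Lfirst] ++ fs ++ [Y_rv]) (x', m') (x, m)).
  rewrite !agree_app.
  destruct (agree fs (x', m') (x, m)); [|rewrite !andb_false_r; reflexivity].
  rewrite andb_true_l. agree_unfold.
  unfold Yfirst, Ylast, Lfirst, Y_rv. simpl fst; simpl snd.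
  rewrite (Hsplit x m), (Hsplit x' m') by lia. split.
  - intros [H1 H2]. injection H1 as ->. injection H2 as ->. auto.
  - intros [H1 [_ H2]]. injection H1 as H1. apply (f_equal (@length nat)) in H1.
    rewrite !repeat_length in H1. injection H2 as H2.
    apply app_inj_len in H2 as [-> ->]; auto.
Qed.

(** Superadditivity up to a logarithmic term: [I_(a+b)(P1 x P2) >= I_a(P1) + I_b(P2) - ln (a+1)].
    The only loss is the entropy of the length of the first block's output. *)
Lemma binary_mi_superadditive :
  binary_mi d (a + b) (prod_input a P1 P2) >= binary_mi d a P1 + binary_mi d b P2 - ln (INR a + 1).
Proof.
  assert (Hs : sumR Om w = 1) by (apply sum_weight, prod_input_dist; auto).
  unfold binary_mi. fold Om w Om1 w1 Om2 w2.
  rewrite !cmi_const by auto using w_nonneg, w1_nonneg, w2_nonneg, mass1, mass2.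
  assert (Split : negent Om w [X_rv; Yfirst; Ylast] - negent Om w [X_rv] - negent Om w [Yfirst; Ylast]
    = (negent Om1 w1 [X_rv; Y_rv] - negent Om1 w1 [X_rv] - negent Om1 w1 [Y_rv])
      + (negent Om2 w2 [X_rv; Y_rv] - negent Om2 w2 [X_rv] - negent Om2 w2 [Y_rv])).
  { rewrite (negent_blocks _ [X_rv; Y_rv] [X_rv; Y_rv]) by (intros; apply agree_blocks_XY; auto).
    rewrite (negent_blocks _ [X_rv] [X_rv]) by (intros; apply agree_blocks_X; auto).
    rewrite (negent_blocks _ [Y_rv] [Y_rv]) by (intros; apply agree_blocks_Y; auto). ring. }
  assert (EXY : negent Om w [X_rv; Yfirst; Ylast] = negent Om w [Lfirst; X_rv; Y_rv])
    by (apply negent_ext; intros; apply (agree_output_split [X_rv]); auto).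
  assert (EY : negent Om w [Yfirst; Ylast] = negent Om w [Lfirst; Y_rv])
    by (apply negent_ext; intros; apply (agree_output_split []); auto).
  assert (Mono : negent Om w [Lfirst; X_rv; Y_rv] <= negent Om w [X_rv; Y_rv]).
  { apply negent_mono; [apply w_nonneg|]. intros o o' _ _.
    apply agree_sublist. intros f Hf. simpl; auto. }
  assert (Card : negent Om w [Y_rv] - negent Om w [Lfirst; Y_rv] <= ln (INR a + 1)).
  { pose proof (negent_add_var_bound Om w w_nonneg Lfirst [Y_rv]
                  (map (fun j => [repeat 0%nat j]) (seq 0 (S a))) Hs) as G.
    rewrite length_map, length_seq, S_INR in G. apply G.
    intros [x m] Ho. apply outcome_len in Ho as [Hx Hm]. apply in_map_iff.
    eexists; split; [reflexivity|]. apply in_seq.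
    pose proof (delete_len (firstn a x) (firstn a m)). rewrite length_firstn in H. simpl. lia. }
  lra.
Qed.

End Blocks.

(** *** The capacity bound for the binary channel *)

Fixpoint iid_blocks (n : nat) (P : list nat -> R) (m : nat) : list nat -> R :=
  match m with
  | O => fun x => match x with [] => 1 | _ => 0 end
  | S m' => prod_input n P (iid_blocks n P m')
  end.

Lemma iid_blocks_dist n P m : is_input_dist 1 n P -> is_input_dist 1 (m * n) (iid_blocks n P m).
Proof.
  intros HP. induction m as [|m IH].
  - split; [intros [|]; simpl; lra|]. simpl. rewrite sumR_cons. unfold sumR; simpl; lra.
  - apply prod_input_dist; auto.
Qed.

Lemma binary_mi_iid_blocks d n P m : 0 <= d <= 1 -> is_input_dist 1 n P ->
  binary_mi d (m * n) (iid_blocks n P m) >= INR m * (binary_mi d n P - ln (INR n + 1)).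
Proof.
  intros Hd HP. induction m as [|m IH].
  - simpl INR. rewrite Rmult_0_l. apply Rle_ge. apply cmi_nonneg.
    intros; apply weight_nonneg; auto. apply (iid_blocks_dist n P 0 HP).
  - pose proof (binary_mi_superadditive d n (m * n) P (iid_blocks n P m) Hd HP
                  (iid_blocks_dist n P m HP)).
    rewrite S_INR. change (S m * n)%nat with (n + m * n)%nat. simpl iid_blocks. lra.
Qed.

(** Every input law achieves at most [n C_2 + ln (n + 1)]: [m] independent copies of
    it achieve rate at least [(I - ln (n + 1)) / n], and these rates tend to at
    most [C_2]. *)
Lemma binary_mi_le_capacity d C2 n P : 0 <= d <= 1 -> is_binary_capacity d C2 ->
  is_input_dist 1 n P -> binary_mi d n P <= INR n * C2 + ln (INR n + 1).
Proof.
  intros Hd [c [Hlub Hcv]] HP.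
  destruct n as [|n'].
  { rewrite binary_mi_empty by auto. simpl INR. rewrite Rplus_0_l, ln_1. lra. }
  set (n := S n'). set (v := (binary_mi d n P - ln (INR n + 1)) / INR n).
  assert (Hn : 0 < INR n) by (apply lt_0_INR; unfold n; lia).
  assert (Hc : forall m, (1 <= m)%nat -> v <= c (m * n)%nat).
  { intros m Hm. destruct (Hlub (m * n)%nat) as [Hub _]; [unfold n; nia|].
    assert (Hm0 : 0 < INR m) by (apply lt_0_INR; lia).
    eapply Rle_trans; [|apply Hub; exists (iid_blocks n P m); split;
                          [apply iid_blocks_dist; auto|reflexivity]].
    pose proof (binary_mi_iid_blocks d n P m Hd HP). fold (binary_mi d (m * n) (iid_blocks n P m)).
    unfold v. rewrite mult_INR.
    apply Rmult_le_reg_r with (INR m * INR n); [nra|].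
    unfold Rdiv. rewrite !Rmult_assoc, Rinv_l by nra.
    replace ((binary_mi d n P - ln (INR n + 1)) * (/ INR n * (INR m * INR n)))
      with (INR m * (binary_mi d n P - ln (INR n + 1))) by (field; lra).
    lra. }
  assert (v <= C2).
  { destruct (Rle_lt_dec v C2) as [H|H]; auto. exfalso.
    destruct (Hcv (v - C2)) as [N0 HN0]; [lra|].
    specialize (HN0 (S N0 * n)%nat ltac:(unfold n; nia)).
    specialize (Hc (S N0) ltac:(lia)). unfold R_dist in HN0.
    apply Rabs_def2 in HN0. lra. }
  unfold v in H. apply (Rmult_le_compat_r (INR n)) in H; [|lra].
  unfold Rdiv in H. rewrite Rmult_assoc, Rinv_l in H by lra. lra.
Qed.

Lemma label_spec s : (2 * label s - 1 <= s <= 2 * label s)%nat /\ (1 <= s -> 1 <= label s)%nat.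
Proof.
  unfold label. pose proof (Nat.div_mod (s + 1) 2 ltac:(lia)).
  pose proof (Nat.mod_upper_bound (s + 1) 2 ltac:(lia)). lia.
Qed.

Lemma alphabet_label K s : In s (alphabet K) -> (1 <= label s <= K)%nat.
Proof.
  unfold alphabet. rewrite in_seq. intros Hs. destruct (label_spec s) as [H1 H2]. split; lia.
Qed.

Lemma sub_label j l s : In s (sub j l) -> label s = j.
Proof. unfold sub. rewrite filter_In. intros [_ H]. apply Nat.eqb_eq; auto. Qed.

Lemma sub_rest j k l : j <> k -> sub j (rest k l) = sub j l.
Proof.
  intros H. induction l as [|c l IH]; auto. rewrite rest_cons.
  destruct (Nat.eqb (label c) k) eqn:E; rewrite !sub_cons; [|rewrite IH; reflexivity].
  apply Nat.eqb_eq in E. replace (Nat.eqb (label c) j) with false by (symmetry; apply Nat.eqb_neq; lia).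
  exact IH.
Qed.

Lemma decomposition_injective K x x' :
  (forall s, In s x -> (1 <= label s <= K)%nat) -> map label x = map label x' ->
  (forall j, (1 <= j <= K)%nat -> sub j x = sub j x') -> x = x'.
Proof.
  revert x'; induction x as [|c x IH]; intros [|c' x'] Hr Hl Hs; simpl in Hl; try discriminate; auto.
  injection Hl as Hl1 Hl2.
  assert (Hc : (1 <= label c <= K)%nat) by (apply Hr; simpl; auto).
  pose proof (Hs (label c) Hc) as E. rewrite !sub_cons, Nat.eqb_refl, Hl1, Nat.eqb_refl in E.
  injection E as <- _. f_equal. apply IH; auto; [intros; apply Hr; simpl; auto|].
  intros j Hj. specialize (Hs j Hj). rewrite !sub_cons in Hs.
  destruct (Nat.eqb (label c) j); [injection Hs|]; auto.
Qed.

(** [relabel k] maps the symbols [2k-1, 2k] of subchannel [k] to the binary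
    symbols [1, 2]; [binary_sub k x] is the subchannel-[k] input as a binary word. *)
Definition relabel (k s : nat) : nat := (s + 2 - 2 * k)%nat.
Definition binary_sub (k : nat) (x : list nat) : list nat := map (relabel k) (sub k x).

Lemma relabel_inj k l l' : (1 <= k)%nat ->
  (forall s, In s l -> label s = k) -> (forall s, In s l' -> label s = k) ->
  map (relabel k) l = map (relabel k) l' -> l = l'.
Proof.
  intros Hk. revert l'; induction l as [|c l IH]; intros [|c' l'] H1 H2 E;
    simpl in E; try discriminate; auto.
  injection E as E1 E2. f_equal; [|apply IH; auto; intros; [apply H1|apply H2]; simpl; auto].
  destruct (label_spec c) as [Hc _]. destruct (label_spec c') as [Hc' _].
  rewrite (H1 c) in Hc by (simpl; auto). rewrite (H2 c') in Hc' by (simpl; auto).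
  unfold relabel in E1. lia.
Qed.

Lemma binary_sub_binary k x : (1 <= k)%nat -> forall s, In s (binary_sub k x) -> In s (alphabet 1).
Proof.
  intros Hk s H. unfold binary_sub in H. apply in_map_iff in H as [t [<- Ht]].
  apply sub_label in Ht. destruct (label_spec t) as [H _]. rewrite Ht in H.
  unfold relabel, alphabet. apply in_seq. lia.
Qed.

(** ** The [2K]-ary channel seen through subchannel [k] *)

Section Channel.
Variables (K N : nat) (d : R) (P : list nat -> R) (k : nat).
Hypothesis Hd : 0 <= d <= 1.
Hypothesis HP : is_input_dist K N P.
Hypothesis Hk : (1 <= k <= K)%nat.

Let Om := outcomes K N.
Let w := weight d P.
Let W := all_words (alphabet K) N.

Let Hw o : 0 <= w o.
Proof. apply weight_nonneg; auto. apply HP. Qed.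
Let Hs : sumR Om w = 1.
Proof. apply sum_weight; auto. Qed.
Let W_len x : In x W -> length x = N.
Proof. intros H; apply In_all_words in H; tauto. Qed.
Let Om_W x m : In (x, m) Om -> In x W.
Proof. intros H. apply In_outcomes in H. tauto. Qed.

Lemma marg_words fs o :
  marg Om w fs o = sumR W (fun x' => P x' * Epat d N (fun m' => if agree fs (x', m') o then 1 else 0)).
Proof.
  rewrite marg_def. unfold Om. rewrite sum_outcomes. apply sumR_ext. intros x' _.
  unfold Epat. rewrite <- sumR_scal. apply sumR_ext. intros m' _.
  unfold w, weight. simpl. destruct agree; ring.
Qed.

Lemma marg_input fs x m : In x W ->
  marg Om w (X_rv :: fs) (x, m) = P x * Epat d N (fun m' => if agree fs (x, m') (x, m) then 1 else 0).
Proof.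
  intros Hx. rewrite marg_words.
  rewrite (sumR_ext _ _ (fun x' => if list_eq_dec Nat.eq_dec x' x then
             P x' * Epat d N (fun m' => if agree fs (x', m') (x, m) then 1 else 0) else 0)).
  - apply (sumR_indic (list_eq_dec Nat.eq_dec)); auto. apply NoDup_all_words, seq_NoDup.
  - intros x' _. destruct (list_eq_dec Nat.eq_dec x' x) as [->|Hne].
    + f_equal. apply Epat_ext. intros m' _.
      change (agree (X_rv :: fs) (x, m') (x, m)) with (rv_eqb [x] [x] && agree fs (x, m') (x, m)).
      rewrite (proj2 (rv_eqb_true [x] [x]) eq_refl). reflexivity.
    + rewrite (Epat_ext _ _ _ (fun _ => 0)), Epat_const; [ring|].
      intros m' _.
      change (agree (X_rv :: fs) (x', m') (x, m)) with (rv_eqb [x'] [x] && agree fs (x', m') (x, m)).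
      destruct (rv_eqb [x'] [x]) eqn:E; [|reflexivity].
      apply rv_eqb_true in E. injection E as E. contradiction.
Qed.

Definition prefix_subs (l : list nat) : list (list nat) := map (fun j => sub j l) (seq 1 (k - 1)).

Lemma Yprefix_rest o : Yprefix_rv k o = prefix_subs (rest k (delete (fst o) (snd o))).
Proof.
  unfold Yprefix_rv, prefix_subs. apply map_ext_in. intros j Hj. apply in_seq in Hj.
  rewrite sub_rest; auto. lia.
Qed.

Lemma markov_given_input :
  negent Om w [X_rv; Yk_rv k; Yprefix_rv k] + negent Om w [X_rv]
  = negent Om w [X_rv; Yk_rv k] + negent Om w [X_rv; Yprefix_rv k].
Proof.
  apply negent_factor; [exact Hw|]. intros [x m] Ho _.
  pose proof (Om_W x m Ho) as Hx. rewrite !marg_input by auto.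
  set (G := fun l : list nat => if rv_eqb [l] (Yk_rv k (x, m)) then 1 else 0).
  set (F := fun l : list nat => if rv_eqb (prefix_subs l) (Yprefix_rv k (x, m)) then 1 else 0).
  rewrite (Epat_ext _ _ _ (fun m' => F (rest k (delete x m')) * G (sub k (delete x m')))).
  2: { intros m' _. unfold F, G. agree_simpl. unfold Yk_rv at 1. rewrite (Yprefix_rest (x, m')).
       simpl fst; simpl snd.
       destruct (rv_eqb [sub k (delete x m')] _), (rv_eqb (prefix_subs _) _); simpl; ring. }
  rewrite (Epat_ext _ _ (fun m' => if agree [Yk_rv k] (x, m') (x, m) then 1 else 0)
                        (fun m' => G (sub k (delete x m')))) by (intros; unfold G; agree_simpl; reflexivity).
  rewrite (Epat_ext _ _ (fun m' => if agree [Yprefix_rv k] (x, m') (x, m) then 1 else 0)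
                        (fun m' => F (rest k (delete x m'))))
    by (intros; unfold F; agree_simpl; rewrite (Yprefix_rest (x, _)); reflexivity).
  rewrite (Epat_ext _ _ (fun m' => if agree [] (x, m') (x, m) then 1 else 0) (fun _ => 1))
    by reflexivity.
  rewrite Epat_const, <- (W_len x Hx), Epat_sub_rest_indep. ring.
Qed.

Definition del_prob (s : list nat) (y : list (list nat)) : R :=
  Epat d (length s) (fun m => if rv_eqb [delete s m] y then 1 else 0).

Lemma Yk_channel x y : In x W ->
  Epat d N (fun m => if rv_eqb (Yk_rv k (x, m)) y then 1 else 0) = del_prob (sub k x) y.
Proof.
  intros Hx. rewrite <- (W_len x Hx). unfold del_prob. rewrite <- Epat_subpat.
  apply Epat_ext. intros m Hm. apply In_all_words in Hm as [Hm _].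
  unfold Yk_rv. simpl. rewrite sub_delete by auto. reflexivity.
Qed.

Definition Xk_rv : RV := fun o => [sub k (fst o)].

Lemma marg_X x m : In x W -> marg Om w [X_rv] (x, m) = P x.
Proof. intros Hx. rewrite marg_input by auto. rewrite (Epat_ext _ _ _ (fun _ => 1)), Epat_const by reflexivity. ring. Qed.

Lemma marg_X_Yk x m : In x W ->
  marg Om w [X_rv; Yk_rv k] (x, m) = P x * del_prob (sub k x) (Yk_rv k (x, m)).
Proof.
  intros Hx. rewrite marg_input, <- Yk_channel by auto. f_equal.
  apply Epat_ext. intros. agree_simpl. reflexivity.
Qed.

Lemma marg_Xk_Yk x m : In x W ->
  marg Om w [Xk_rv; Yk_rv k] (x, m) = del_prob (sub k x) (Yk_rv k (x, m)) * marg Om w [Xk_rv] (x, m).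
Proof.
  intros Hx. rewrite !marg_words, <- sumR_scal. apply sumR_ext. intros x' Hx'.
  agree_simpl. unfold Xk_rv at 1 2 3 4. simpl fst.
  destruct (rv_eqb [sub k x'] [sub k x]) eqn:E.
  - apply rv_eqb_true in E. injection E as E.
    rewrite (Epat_ext _ _ _ (fun m' => if rv_eqb (Yk_rv k (x', m')) (Yk_rv k (x, m)) then 1 else 0))
      by (intros; destruct rv_eqb; reflexivity).
    rewrite Yk_channel, E, Epat_const by auto. simpl. ring.
  - rewrite (Epat_ext _ _ _ (fun _ => 0)), !Epat_const by reflexivity. simpl. ring.
Qed.

Lemma input_to_subchannel :
  negent Om w [X_rv; Yk_rv k] + negent Om w [Xk_rv] = negent Om w [Xk_rv; Yk_rv k] + negent Om w [X_rv].
Proof.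
  apply negent_factor; [exact Hw|]. intros [x m] Ho _. pose proof (Om_W x m Ho) as Hx.
  rewrite marg_X_Yk, marg_Xk_Yk, marg_X by auto. ring.
Qed.

(** *** Conditioning on the number [N_k] of subchannel-[k] input symbols *)

Definition Nk (o : outcome) : nat := length (sub k (fst o)).
Definition Nk_rv : RV := fun o => [repeat 0%nat (Nk o)].

Definition pN (n : nat) : R := sumR Om (fun o => if Nat.eqb (Nk o) n then w o else 0).
Definition cond_input (n : nat) (x' : list nat) : R :=
  sumR W (fun x => if list_eq_dec Nat.eq_dec x' (binary_sub k x) then P x else 0) / pN n.
Definition to_binary (o : outcome) : outcome := (binary_sub k (fst o), subpat k (fst o) (snd o)).

Lemma pN_nonneg n : 0 <= pN n.
Proof. apply sumR_nonneg. intros; destruct Nat.eqb; [apply Hw|lra]. Qed.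

Lemma Nk_le o : In o Om -> (Nk o <= N)%nat.
Proof.
  destruct o as [x m]. intros Ho. apply outcome_len in Ho as [H _].
  unfold Nk. simpl. rewrite <- H. apply filter_length_le.
Qed.

Lemma sumR_by_Nk (f : outcome -> R) :
  sumR Om f = sumR (seq 0 (S N)) (fun n => sumR Om (fun o => if Nat.eqb (Nk o) n then f o else 0)).
Proof.
  rewrite sumR_swap. apply sumR_ext. intros o Ho. symmetry.
  rewrite (sumR_ext _ _ (fun n => if Nat.eq_dec n (Nk o) then f o else 0)).
  - apply (sumR_indic Nat.eq_dec); [apply seq_NoDup|]. apply in_seq. pose proof (Nk_le o Ho). lia.
  - intros n _. destruct (Nat.eq_dec n (Nk o)) as [->|Hne]; [rewrite Nat.eqb_refl; reflexivity|].
    replace (Nat.eqb (Nk o) n) with false by (symmetry; apply Nat.eqb_neq; auto). reflexivity.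
Qed.

Lemma sum_binary_words n x (f : list nat -> R) :
  sumR (all_words (alphabet 1) n) (fun x' => if list_eq_dec Nat.eq_dec x' (binary_sub k x) then f x' else 0)
  = if Nat.eqb (length (sub k x)) n then f (binary_sub k x) else 0.
Proof.
  destruct (Nat.eqb (length (sub k x)) n) eqn:E.
  - apply (sumR_indic (list_eq_dec Nat.eq_dec)); [apply NoDup_all_words, seq_NoDup|].
    apply In_all_words. split; [unfold binary_sub; rewrite length_map; apply Nat.eqb_eq; auto|].
    intros s Hin. apply (binary_sub_binary k x); [lia|auto].
  - apply sumR_indic_out. intros H. apply In_all_words in H as [H _].
    unfold binary_sub in H. rewrite length_map in H. apply Nat.eqb_neq in E. contradiction.
Qed.

(** On the event [N_k = n], the channel restricted to subchannel [k] is the binary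
    deletion channel on [n] symbols with input law [cond_input n]. *)
Lemma sumR_given_Nk n (G : outcome -> R) : 0 < pN n ->
  sumR Om (fun o => if Nat.eqb (Nk o) n then w o * G (to_binary o) else 0)
  = pN n * sumR (outcomes 1 n) (fun o' => weight d (cond_input n) o' * G o').
Proof.
  intros Hp. unfold Om. rewrite !sum_outcomes.
  rewrite (sumR_ext _ _ (fun x => if Nat.eqb (length (sub k x)) n
                                  then P x * Epat d n (fun m => G (binary_sub k x, m)) else 0)).
  2: { intros x Hx. unfold Nk. simpl fst. destruct (Nat.eqb (length (sub k x)) n) eqn:E.
       - apply Nat.eqb_eq in E. rewrite <- E, <- Epat_subpat, (W_len x Hx).
         unfold Epat. rewrite <- sumR_scal. apply sumR_ext. intros m _.
         unfold w, weight, to_binary. simpl. ring.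
       - apply sumR_zero. }
  rewrite <- sumR_scal.
  transitivity (sumR (all_words (alphabet 1) n) (fun x' => sumR W (fun x =>
      if list_eq_dec Nat.eq_dec x' (binary_sub k x) then P x * Epat d n (fun m => G (x', m)) else 0))).
  - rewrite sumR_swap. apply sumR_ext. intros x _. symmetry.
    apply (sum_binary_words n x (fun x' => P x * Epat d n (fun m => G (x', m)))).
  - apply sumR_ext. intros x' _.
    rewrite (sumR_ext _ _ (fun m => cond_input n x' * (pattern_prob d m * G (x', m))))
      by (intros; unfold weight; simpl; ring).
    rewrite sumR_scal. fold (Epat d n (fun m => G (x', m))). unfold cond_input.
    rewrite (sumR_ext _ _ (fun x => (if list_eq_dec Nat.eq_dec x' (binary_sub k x) then P x else 0)
                                    * Epat d n (fun m => G (x', m))))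
      by (intros; destruct list_eq_dec; ring).
    rewrite sumR_scal_r. field. lra.
Qed.

Lemma cond_input_dist n : 0 < pN n -> is_input_dist 1 n (cond_input n).
Proof.
  intros Hp. split.
  - intros x'. unfold cond_input. apply div_nonneg; [|lra].
    apply sumR_nonneg. intros; destruct list_eq_dec; [apply HP|lra].
  - pose proof (sumR_given_Nk n (fun _ => 1) Hp) as E.
    rewrite <- (sum_weight_words d).
    apply Rmult_eq_reg_l with (pN n); [|lra].
    rewrite Rmult_1_r, (sumR_ext _ _ (fun o' => weight d (cond_input n) o' * 1)) by (intros; ring).
    rewrite <- E. unfold pN. apply sumR_ext. intros; destruct Nat.eqb; ring.
Qed.

Lemma marg_given_Nk fs fs' o n : 0 < pN n ->
  (forall o', In o' Om -> agree fs o' o = Nat.eqb (Nk o') n && agree fs' (to_binary o') (to_binary o)) ->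
  marg Om w fs o = pN n * marg (outcomes 1 n) (weight d (cond_input n)) fs' (to_binary o).
Proof.
  intros Hp H. rewrite marg_def.
  rewrite (sumR_ext _ _ (fun o' => if Nat.eqb (Nk o') n then
             w o' * (if agree fs' (to_binary o') (to_binary o) then 1 else 0) else 0))
    by (intros o' Ho'; rewrite H by auto; destruct Nat.eqb, agree; simpl; ring).
  rewrite (sumR_given_Nk n (fun o' => if agree fs' o' (to_binary o) then 1 else 0)) by auto.
  rewrite marg_def. f_equal. apply sumR_ext. intros; destruct agree; ring.
Qed.

Lemma relabel_eqb l l' : (forall s, In s l -> label s = k) -> (forall s, In s l' -> label s = k) ->
  rv_eqb [l'] [l] = rv_eqb [map (relabel k) l'] [map (relabel k) l].
Proof.
  intros H1 H2. apply eq_iff_eq_true. rewrite !rv_eqb_true. split.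
  - intros E; injection E as ->; reflexivity.
  - intros E; injection E as E. apply relabel_inj in E; [subst; auto|lia|auto|auto].
Qed.

Lemma Xk_eqb o o' : rv_eqb (Xk_rv o') (Xk_rv o) = rv_eqb (X_rv (to_binary o')) (X_rv (to_binary o)).
Proof. apply relabel_eqb; intros; eapply sub_label; eauto. Qed.

Lemma Yk_eqb o o' : In o Om -> In o' Om ->
  rv_eqb (Yk_rv k o') (Yk_rv k o) = rv_eqb (Y_rv (to_binary o')) (Y_rv (to_binary o)).
Proof.
  assert (Hy : forall q, In q Om -> Y_rv (to_binary q) = [map (relabel k) (sub k (delete (fst q) (snd q)))]).
  { intros [x m] Hq. apply outcome_len in Hq as [H1 H2]. unfold Y_rv, to_binary, binary_sub. simpl.
    rewrite delete_map, sub_delete by lia. reflexivity. }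
  intros Ho Ho'. rewrite !Hy by auto. apply relabel_eqb; intros; eapply sub_label; eauto.
Qed.

Lemma Nk_eqb o o' : rv_eqb (Nk_rv o') (Nk_rv o) = Nat.eqb (Nk o') (Nk o).
Proof.
  apply eq_iff_eq_true. rewrite rv_eqb_true, Nat.eqb_eq. unfold Nk_rv. split.
  - intros E; injection E as E. apply (f_equal (@length nat)) in E. rewrite !repeat_length in E. auto.
  - intros ->; reflexivity.
Qed.

Ltac transfer_agree HN Ho Ho' :=
  agree_simpl; rewrite ?Xk_eqb, ?Nk_eqb, ?(Yk_eqb _ _ Ho Ho'), HN;
  repeat match goal with |- context [rv_eqb ?a ?b] => destruct (rv_eqb a b) end;
  destruct (Nat.eqb _ _); reflexivity.

Lemma slice_identity n : 0 < pN n ->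
  sumR Om (fun o => if Nat.eqb (Nk o) n then
    w o * ln (marg Om w [Xk_rv; Yk_rv k; Nk_rv] o * marg Om w [Nk_rv] o /
              (marg Om w [Xk_rv; Nk_rv] o * marg Om w [Yk_rv k; Nk_rv] o)) else 0)
  = pN n * binary_mi d n (cond_input n).
Proof.
  intros Hp. set (p' := marg (outcomes 1 n) (weight d (cond_input n))).
  set (g := fun o' => ln (p' [X_rv; Y_rv; const_rv] o' * p' [const_rv] o' /
                          (p' [X_rv; const_rv] o' * p' [Y_rv; const_rv] o'))).
  rewrite (sumR_ext _ _ (fun o => if Nat.eqb (Nk o) n then w o * g (to_binary o) else 0)).
  - rewrite sumR_given_Nk by auto. reflexivity.
  - intros o Ho. destruct (Nat.eqb (Nk o) n) eqn:E; auto. apply Nat.eqb_eq in E.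
    rewrite (marg_given_Nk _ [X_rv; Y_rv; const_rv] o n), (marg_given_Nk _ [const_rv] o n),
      (marg_given_Nk _ [X_rv; const_rv] o n), (marg_given_Nk _ [Y_rv; const_rv] o n)
      by (auto; intros o' Ho'; transfer_agree E Ho Ho').
    unfold g. fold p'. f_equal. f_equal.
    transitivity ((pN n * / pN n) * (pN n * / pN n) *
      (p' [X_rv; Y_rv; const_rv] (to_binary o) * p' [const_rv] (to_binary o) /
       (p' [X_rv; const_rv] (to_binary o) * p' [Y_rv; const_rv] (to_binary o)))).
    + unfold Rdiv. rewrite !Rinv_mult. ring.
    + rewrite Rinv_r by lra. ring.
Qed.

Lemma slice_bound C2 n : is_binary_capacity d C2 -> (n <= N)%nat ->
  sumR Om (fun o => if Nat.eqb (Nk o) n then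
    w o * ln (marg Om w [Xk_rv; Yk_rv k; Nk_rv] o * marg Om w [Nk_rv] o /
              (marg Om w [Xk_rv; Nk_rv] o * marg Om w [Yk_rv k; Nk_rv] o)) else 0)
  <= pN n * INR n * C2 + pN n * ln (INR N + 1).
Proof.
  intros Hcap HnN. destruct (pN_nonneg n) as [Hp|H0].
  - rewrite slice_identity by auto.
    pose proof (binary_mi_le_capacity d C2 n (cond_input n) Hd Hcap (cond_input_dist n Hp)).
    assert (ln (INR n + 1) <= ln (INR N + 1)).
    { apply ln_le; [pose proof (pos_INR n); lra|]. apply le_INR in HnN. lra. }
    rewrite Rmult_assoc, <- Rmult_plus_distr_l. apply Rmult_le_compat_l; lra.
  - assert (Hz : forall o, In o Om -> Nat.eqb (Nk o) n = true -> w o = 0).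
    { intros o Ho E.
      pose proof (sumR_nonneg_eq0 Om (fun q => if Nat.eqb (Nk q) n then w q else 0)) as Z.
      cbv beta in Z. specialize (Z ltac:(intros q _; destruct (Nat.eqb (Nk q) n); [apply Hw|lra])
                                  (eq_sym H0) o Ho).
      rewrite E in Z. exact Z. }
    rewrite <- H0, (sumR_ext _ _ (fun _ => 0)), sumR_zero; [lra|].
    intros o Ho. destruct (Nat.eqb (Nk o) n) eqn:E; [rewrite Hz by auto; ring|reflexivity].
Qed.

Lemma cond_mi_bound C2 : is_binary_capacity d C2 ->
  negent Om w [Xk_rv; Yk_rv k; Nk_rv] + negent Om w [Nk_rv]
  - negent Om w [Xk_rv; Nk_rv] - negent Om w [Yk_rv k; Nk_rv]
  <= expected_Nk K N d P k * C2 + ln (INR N + 1).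
Proof.
  intros Hcap. rewrite <- (sumR_ln_ratio Om w Hw), sumR_by_Nk.
  assert (E1 : expected_Nk K N d P k = sumR (seq 0 (S N)) (fun n => pN n * INR n)).
  { unfold expected_Nk. fold Om w. rewrite sumR_by_Nk. apply sumR_ext. intros n _.
    unfold pN. rewrite <- sumR_scal_r. apply sumR_ext. intros o _. unfold Nk.
    destruct (Nat.eqb (length (sub k (fst o))) n) eqn:E; [|ring].
    apply Nat.eqb_eq in E. rewrite E. reflexivity. }
  assert (E2 : sumR (seq 0 (S N)) pN = 1) by (rewrite <- Hs, (sumR_by_Nk w); reflexivity).
  rewrite E1, <- sumR_scal_r.
  replace (ln (INR N + 1)) with (sumR (seq 0 (S N)) pN * ln (INR N + 1)) by (rewrite E2; ring).
  rewrite <- sumR_scal_r, <- sumR_plus. apply sumR_le. intros n Hn. apply in_seq in Hn.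
  apply slice_bound; auto. lia.
Qed.

Lemma Xdec_eqb o o' : In o Om -> In o' Om ->
  rv_eqb (Xdec_rv K o') (Xdec_rv K o) = rv_eqb (X_rv o') (X_rv o).
Proof.
  destruct o as [x m], o' as [x' m']. intros Ho Ho'.
  pose proof (Om_W x m Ho) as Hx. pose proof (Om_W x' m' Ho') as Hx'.
  apply eq_iff_eq_true. rewrite !rv_eqb_true. unfold Xdec_rv, X_rv. simpl. split.
  - intros E. apply app_inj_len in E as [E1 E2]; [|rewrite !length_map; reflexivity].
    injection E2 as E2. f_equal. apply (decomposition_injective K); auto.
    + intros s Hin. apply alphabet_label. apply In_all_words in Hx' as [_ Hx']. auto.
    + intros j Hj. apply (proj1 map_ext_in_iff E1). apply in_seq; lia.
  - intros E; injection E as ->; reflexivity.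
Qed.

(** By the Markov property and since the input acts on [Y_k] only through [X_k],
    [I(X_1..X_K,F_x; Y_k | Y_1..Y_(k-1)) <= I(X_k; Y_k)]. *)
Lemma cmi_le_subchannel_mi :
  cmi Om w (Xdec_rv K) (Yk_rv k) (Yprefix_rv k)
  <= negent Om w [Xk_rv; Yk_rv k] - negent Om w [Xk_rv] - negent Om w [Yk_rv k].
Proof.
  rewrite (cmi_negent Om w Hw).
  assert (A1 : negent Om w [Xdec_rv K; Yk_rv k; Yprefix_rv k] = negent Om w [X_rv; Yk_rv k; Yprefix_rv k])
    by (apply negent_ext; intros; agree_simpl; rewrite Xdec_eqb by auto; reflexivity).
  assert (A2 : negent Om w [Xdec_rv K; Yprefix_rv k] = negent Om w [X_rv; Yprefix_rv k])
    by (apply negent_ext; intros; agree_simpl; rewrite Xdec_eqb by auto; reflexivity).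
  pose proof markov_given_input as HM.
  pose proof (negent_submodular Om w Hw [Yk_rv k] [Yprefix_rv k] []) as HG. simpl app in HG.
  rewrite (negent_nil Om w Hs) in HG.
  pose proof input_to_subchannel as HX.
  lra.
Qed.

(** Conditioning on [N_k], a function of [X_k] with at most [N + 1] values:
    [I(X_k; Y_k) <= I(X_k; Y_k | N_k) + ln (N + 1)]. *)
Lemma subchannel_mi_le_cond :
  negent Om w [Xk_rv; Yk_rv k] - negent Om w [Xk_rv] - negent Om w [Yk_rv k]
  <= negent Om w [Xk_rv; Yk_rv k; Nk_rv] + negent Om w [Nk_rv]
     - negent Om w [Xk_rv; Nk_rv] - negent Om w [Yk_rv k; Nk_rv] + ln (INR N + 1).
Proof.
  assert (Hf : forall fs o o', In o Om -> In o' Om ->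
             agree (Xk_rv :: fs) o' o = agree (Xk_rv :: fs ++ [Nk_rv]) o' o).
  { intros fs o o' _ _. change (agree (Xk_rv :: fs ++ [Nk_rv]) o' o)
      with (agree ((Xk_rv :: fs) ++ [Nk_rv]) o' o).
    rewrite agree_app. destruct (agree (Xk_rv :: fs) o' o) eqn:E; auto.
    agree_simpl. cbn in E. apply andb_prop in E as [E _]. apply rv_eqb_true in E.
    unfold Nk_rv, Nk. unfold Xk_rv in E. injection E as ->. symmetry. apply rv_eqb_true. reflexivity. }
  assert (E1 : negent Om w [Xk_rv; Yk_rv k] = negent Om w [Xk_rv; Yk_rv k; Nk_rv])
    by (apply negent_ext; intros; apply (Hf [Yk_rv k]); auto).
  assert (E2 : negent Om w [Xk_rv] = negent Om w [Xk_rv; Nk_rv])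
    by (apply negent_ext; intros; apply (Hf []); auto).
  assert (Mono : negent Om w [Yk_rv k; Nk_rv] <= negent Om w [Yk_rv k]).
  { apply negent_mono; [exact Hw|]. intros o o' _ _. apply agree_sublist. simpl; tauto. }
  assert (Card : negent Om w [] - negent Om w [Nk_rv] <= ln (INR N + 1)).
  { pose proof (negent_add_var_bound Om w Hw Nk_rv [] (map (fun j => [repeat 0%nat j]) (seq 0 (S N))) Hs) as G.
    rewrite length_map, length_seq, S_INR in G. apply G.
    intros o Ho. apply in_map_iff. exists (Nk o). split; [reflexivity|].
    apply in_seq. pose proof (Nk_le o Ho). lia. }
  rewrite (negent_nil Om w Hs) in Card. lra.
Qed.

End Channel.

Theorem lemma1 (K N : nat) (d : R) (P : list nat -> R) (k : nat) (C2 : R) :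
  (1 <= K)%nat -> (1 <= N)%nat -> 0 <= d <= 1 ->
  is_input_dist K N P ->
  (1 <= k <= K)%nat ->
  is_binary_capacity d C2 ->
  cmi (outcomes K N) (weight d P) (Xdec_rv K) (Yk_rv k) (Yprefix_rv k)
    <= expected_Nk K N d P k * C2 + 2 * ln (INR N + 1).
Proof.
  intros _ _ Hd HP Hk Hcap.
  pose proof (cmi_le_subchannel_mi K N d P k Hd HP Hk) as Step1.
  pose proof (subchannel_mi_le_cond K N d P k Hd HP Hk) as Step2.
  pose proof (cond_mi_bound K N d P k Hd HP Hk C2 Hcap) as Step3.
  lra.
Qed.
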